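(* The following conditions are equivalent. (i) The sequence $N$ is a semi-free DG $B$-module; (ii) The sequence $N$ is a DG $B$-module; and (iii) For all integers $i$ and $j$ we have $\xi_i=-\alpha_i$, $\tau_i=t$, $\alpha_{i-1}\alpha_i=-t\delta_i$, $\delta_i\alpha_{i+1}=\alpha_{i-1}\delta_{i+1}$, $\delta_{i+j}(\gamma_{i,s} m_j)=\gamma_{i,s} \delta_j(m_j)$, $\alpha_{i+j}(\gamma_{i,s} m_j)=\partial_i^A(\gamma_{i,s})m_j+(-1)^i\gamma_{i,s}\alpha_j(m_j)$ for $s=1,\ldots,r_i$ and for all $m_j\in M_j$. In particular, if $N$ is a DG $B$-module, then $\partial_i^N=\begin{bmatrix}-\alpha_{i-1} & \delta_i \\ t & \alpha_i\end{bmatrix}$.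
   Context: Let $R$ be a commutative noetherian ring. Let $A$ be a (commutative, positively graded) DG $R$-algebra such that each $A_i$ is free over $R$ of finite rank, with fixed basis $\{\gamma_{i,1},\ldots,\gamma_{i,r_i}\}$ of $A_i$. Let $t\in R$, let $K=K^R(t)$ be the Koszul complex $0\to K_1\xrightarrow{t}K_0\to 0$ with bases $1\in K_0$, $e\in K_1$, and let $B=K^R(t)\otimes_R A$. Identify $B_i=(K_1\otimes_R A_{i-1})\oplus(K_0\otimes_R A_i)$ with $A_{i-1}\oplus A_i$, writing $e\otimes a_{i-1}+1\otimes a_i$ as the column vector $\left[\begin{smallmatrix}a_{i-1}\\ a_i\end{smallmatrix}\right]$; then $\partial^B_i=\left[\begin{smallmatrix}-\partial^A_{i-1} & 0\\ t & \partial^A_i\end{smallmatrix}\right]$ and the product is $\left[\begin{smallmatrix}a_{i-1}\\ a_i\end{smallmatrix}\right]\left[\begin{smallmatrix}c_{j-1}\\ c_j\end{smallmatrix}\right]=\left[\begin{smallmatrix}a_{i-1}c_j+(-1)^ia_ic_{j-1}\\ a_ic_j\end{smallmatrix}\right]$. Let $\{\beta_i\}_{i\in\mathbb Z}$ be cardinal numbers with $\beta_i=0$ for $i\ll0$, and set $M_i=\bigoplus_{j\ge0}A_j^{(\beta_{i-j})}$ (direct sums of copies of $A_j$ indexed by $\beta_{i-j}$), with scalar multiplication by $A$ componentwise. Let $\xi_i\colon M_i\to M_{i-1}$, $\tau_i\colon M_i\to M_i$, $\delta_i\colon M_i\to M_{i-2}$, $\alpha_i\colon M_i\to M_{i-1}$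 be $R$-module homomorphisms, set $N_i=M_{i-1}\oplus M_i$ and $\partial^N_i=\left[\begin{smallmatrix}\xi_{i-1}&\delta_i\\ \tau_{i-1}&\alpha_i\end{smallmatrix}\right]\colon N_i\to N_{i-1}$, and let $N$ be the sequence $\cdots\to N_i\xrightarrow{\partial^N_i}N_{i-1}\to\cdots$ (not assumed to be a complex), with $B$ acting by $\left[\begin{smallmatrix}a_{i-1}\\ a_i\end{smallmatrix}\right]\left[\begin{smallmatrix}m_{j-1}\\ m_j\end{smallmatrix}\right]=\left[\begin{smallmatrix}a_{i-1}m_j+(-1)^ia_im_{j-1}\\ a_im_j\end{smallmatrix}\right]$. *)

From HB Require Import structures.
From mathcomp Require Import all_boot all_order all_algebra.
From mathcomp Require Import boolp.
From Stdlib Require List.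
Set Implicit Arguments. Unset Strict Implicit. Unset Printing Implicit Defensive.
Import GRing.Theory.
Local Open Scope ring_scope.

Definition gcast (R : pzRingType) (V : int -> lmodType R) (i j : int) (e : i = j) (x : V i) : V j :=
  ecast k (V k) e x.
Arguments gcast [R] V [i j] e x.

Section DProd.
Variables (R : pzRingType) (I : Type) (V : I -> lmodType R).
Definition dprod := forall i, V i.
HB.instance Definition _ := gen_eqMixin dprod.
HB.instance Definition _ := gen_choiceMixin dprod.
Definition dprod_zero : dprod := fun i => 0.
Definition dprod_add (f g : dprod) : dprod := fun i => f i + g i.
Definition dprod_opp (f : dprod) : dprod := fun i => - f i.
Definition dprod_scale (c : R) (f : dprod) : dprod := fun i => c *: f i.
Lemma dprod_addA : associative dprod_add.
Proof. by move=> f g h; apply: functional_extensionality_dep => i; rewrite /dprod_add addrA. Qed.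
Lemma dprod_addC : commutative dprod_add.
Proof. by move=> f g; apply: functional_extensionality_dep => i; rewrite /dprod_add addrC. Qed.
Lemma dprod_add0 : left_id dprod_zero dprod_add.
Proof. by move=> f; apply: functional_extensionality_dep => i; rewrite /dprod_add add0r. Qed.
Lemma dprod_addN : left_inverse dprod_zero dprod_opp dprod_add.
Proof. by move=> f; apply: functional_extensionality_dep => i; rewrite /dprod_add addNr. Qed.
HB.instance Definition _ := GRing.isZmodule.Build dprod dprod_addA dprod_addC dprod_add0 dprod_addN.
Lemma dprod_scaleA a b f : dprod_scale a (dprod_scale b f) = dprod_scale (a * b) f.
Proof. by apply: functional_extensionality_dep => i; rewrite /dprod_scale scalerA. Qed.
Lemma dprod_scale1 : left_id 1 dprod_scale.
Proof. by move=> f; apply: functional_extensionality_dep => i; rewrite /dprod_scale scale1r. Qed.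
Lemma dprod_scaleDr : right_distributive dprod_scale dprod_add.
Proof. by move=> a f g; apply: functional_extensionality_dep => i; rewrite /dprod_scale /dprod_add scalerDr. Qed.
Lemma dprod_scaleDl f : {morph dprod_scale^~ f : a b / a + b >-> dprod_add a b}.
Proof. by move=> a b; apply: functional_extensionality_dep => i; rewrite /dprod_scale /dprod_add scalerDl. Qed.
HB.instance Definition _ := GRing.Zmodule_isLmodule.Build R dprod dprod_scaleA dprod_scale1 dprod_scaleDr dprod_scaleDl.

Definition finsupp (f : dprod) : bool :=
  `[< exists s : seq I, forall i, f i != 0 -> List.In i s >].

Lemma finsupp_closed : GRing.subsemimod_closed finsupp.
Proof.
split; [split|].
- by apply/asboolP; exists [::] => i; rewrite eqxx.
- move=> f g /asboolP [s Hs] /asboolP [s' Hs']; apply/asboolP; exists (s ++ s') => i Hi.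
  apply/List.in_or_app; have [/eqP f0|/Hs] := boolP (f i == 0); last by left.
  right; apply: Hs'; apply: contra Hi => /eqP g0.
  by rewrite /+%R /= /dprod_add f0 g0 addr0.
- move=> a f /asboolP [s Hs]; apply/asboolP; exists s => i Hi; apply: Hs.
  by apply: contra Hi => /eqP f0; rewrite /GRing.scale /= /dprod_scale f0 scaler0.
Qed.
HB.instance Definition _ := GRing.isSubmodClosed.Build R dprod finsupp finsupp_closed.

Record dsum := DSum { dsum_val : dprod; dsum_valP : finsupp dsum_val }.
HB.instance Definition _ := [isSub for dsum_val].
HB.instance Definition _ := [Choice of dsum by <:].
HB.instance Definition _ := [SubChoice_isSubLmodule of dsum by <:].

Definition dcomp (m : dsum) (i : I) : V i := dsum_val m i.
End DProd.

Lemma eq_dl (i j : int) : (i - 1) + j = (i + j) - 1.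
Proof. by rewrite addrAC. Qed.
Lemma eq_dr (i j : int) : i + (j - 1) = (i + j) - 1.
Proof. by rewrite addrA. Qed.
Lemma eq_dd (i j : int) : i + (j - 1 - 1) = (i + j) - 1 - 1.
Proof. by rewrite !addrA. Qed.
Lemma eq_sub (k j l : int) : k + (j - l) = (k + j) - l.
Proof. by rewrite addrA. Qed.
Lemma eq_subK (k l : int) : (k - l) + l = k.
Proof. by rewrite subrK. Qed.
Lemma eq_addK1 (i : int) : i + 1 - 1 = i.
Proof. by rewrite addrK. Qed.
Lemma eq_addK1' (i : int) : i + 1 - 1 - 1 = i - 1.
Proof. by rewrite addrK. Qed.

Definition sgn (R : pzRingType) (i : int) : R := (-1) ^+ absz i.

Definition is_ideal (R : comRingType) (J : R -> Prop) :=
  [/\ J 0, (forall x y, J x -> J y -> J (x + y)) & (forall a x, J x -> J (a * x))].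
Definition noetherian (R : comRingType) :=
  forall J : nat -> R -> Prop, (forall n, is_ideal (J n)) ->
    (forall n x, J n x -> J n.+1 x) ->
    exists n, forall m, (n <= m)%N -> forall x, J m x <-> J n x.

Definition is_basis (R : pzRingType) (V : lmodType R) (n : nat) (g : 'I_n -> V) :=
  (forall v, exists c : 'I_n -> R, v = \sum_(s < n) c s *: g s) /\
  (forall c : 'I_n -> R, \sum_(s < n) c s *: g s = 0 -> forall s, c s = 0).

Record cdga (R : comRingType) := CDGA {
  dga :> int -> lmodType R;
  dga_mul : forall i j, dga i -> dga j -> dga (i + j);
  dga_one : dga 0;
  dga_d : forall i, dga i -> dga (i - 1);
  dga_pos : forall i, i < 0 -> forall a : dga i, a = 0;
  dga_d_lin : forall i (c : R) (a b : dga i), dga_d (c *: a + b) = c *: dga_d a + dga_d b;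
  dga_mul_linl : forall i j (c : R) (a a' : dga i) (b : dga j),
      dga_mul (c *: a + a') b = c *: dga_mul a b + dga_mul a' b;
  dga_mul_linr : forall i j (c : R) (a : dga i) (b b' : dga j),
      dga_mul a (c *: b + b') = c *: dga_mul a b + dga_mul a b';
  dga_mulA : forall i j k (a : dga i) (b : dga j) (c : dga k),
      dga_mul (dga_mul a b) c = gcast dga (addrA i j k) (dga_mul a (dga_mul b c));
  dga_mul1 : forall i (a : dga i), gcast dga (add0r i) (dga_mul dga_one a) = a;
  dga_mulC : forall i j (a : dga i) (b : dga j),
      dga_mul a b = sgn R (i * j) *: gcast dga (addrC j i) (dga_mul b a);
  dga_sq : forall i (a : dga i), odd (absz i) -> dga_mul a a = 0;
  dga_dd : forall i (a : dga i), dga_d (dga_d a) = 0;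
  dga_leibniz : forall i j (a : dga i) (b : dga j),
      dga_d (dga_mul a b) = gcast dga (eq_dl i j) (dga_mul (dga_d a) b)
                            + sgn R i *: gcast dga (eq_dr i j) (dga_mul a (dga_d b))
}.

Section Construction.
Variables (R : comRingType) (A : cdga R).

Lemma dga_mul0r i j (b : A j) : dga_mul (0 : A i) b = 0.
Proof.
have H := @dga_mul_linl R A i j 1 0 0 b.
rewrite !scale1r (addr0 (0 : A i)) in H.
by apply/eqP; rewrite -(addrK (dga_mul (0 : A i) b) (dga_mul (0 : A i) b)) -{1}H subrr.
Qed.
Lemma dga_mulr0 i j (a : A i) : dga_mul a (0 : A j) = 0.
Proof.
have H := @dga_mul_linr R A i j 1 a 0 0.
rewrite !scale1r (addr0 (0 : A j)) in H.
by apply/eqP; rewrite -(addrK (dga_mul a (0 : A j)) (dga_mul a (0 : A j))) -{1}H subrr.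
Qed.
Lemma gcast_eq0 (V : int -> lmodType R) i j (e : i = j) (x : V i) :
  gcast V e x != 0 -> x != 0.
Proof. by case: j / e. Qed.

(* ---- B = K^R(t) (x) A, with B_i = A_{i-1} (+) A_i ---- *)
Definition Bmod (i : int) : lmodType R := (A (i - 1) * A i)%type.
Definition Bmul i j (b : Bmod i) (c : Bmod j) : Bmod (i + j) :=
  (gcast (dga A) (eq_dl i j) (dga_mul b.1 c.2) + sgn R i *: gcast (dga A) (eq_dr i j) (dga_mul b.2 c.1),
   dga_mul b.2 c.2).
Definition Bone : Bmod 0 := (0, dga_one A).
Definition Bd (t : R) i (b : Bmod i) : Bmod (i - 1) :=
  (- dga_d b.1, t *: b.1 + dga_d b.2).

(* ---- M_i = (+)_{j >= 0} A_j^(beta_{i-j}), the cardinal beta_l being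
   that of the index type X l; we index the summands by the pairs
   (l, x) with x : X l, the summand being A_{i-l} (which is 0 if l > i) ---- *)
Variable X : int -> Type.
Definition Mmod (i : int) : lmodType R :=
  dsum (fun p : {l : int & X l} => A (i - tag p)).

Definition actM_fun k j (a : A k) (m : Mmod j) : dprod (fun p : {l : int & X l} => A ((k + j) - tag p)) :=
  fun p => gcast (dga A) (eq_sub k j (tag p)) (dga_mul a (dcomp m p)).
Lemma actM_supp k j (a : A k) (m : Mmod j) : finsupp (actM_fun a m).
Proof.
case: m => f Hf; case/asboolP: (Hf) => s Hs; apply/asboolP; exists s => p Hp; apply: Hs.
have := gcast_eq0 Hp; apply: contra => /eqP f0.
by rewrite /dcomp /= f0 dga_mulr0.
Qed.
Definition actM k j (a : A k) (m : Mmod j) : Mmod (k + j) := DSum (actM_supp a m).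

Definition Nmod (i : int) : lmodType R := (Mmod (i - 1) * Mmod i)%type.
Definition Nact i j (b : Bmod i) (n : Nmod j) : Nmod (i + j) :=
  (gcast Mmod (eq_dl i j) (actM b.1 n.2) + sgn R i *: gcast Mmod (eq_dr i j) (actM b.2 n.1),
   actM b.2 n.2).
Definition Nd (xi : forall i, {linear Mmod i -> Mmod (i - 1)})
  (tau : forall i, {linear Mmod i -> Mmod i})
  (delta : forall i, {linear Mmod i -> Mmod (i - 1 - 1)})
  (alpha : forall i, {linear Mmod i -> Mmod (i - 1)}) i (n : Nmod i) : Nmod (i - 1) :=
  (xi (i - 1) n.1 + delta i n.2, tau (i - 1) n.1 + alpha i n.2).
End Construction.

Section DGModules.
Variables (R : comRingType) (Bm : int -> lmodType R)
  (mulB : forall i j, Bm i -> Bm j -> Bm (i + j)) (oneB : Bm 0)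
  (dB : forall i, Bm i -> Bm (i - 1)).
Variables (Nm : int -> lmodType R) (act : forall i j, Bm i -> Nm j -> Nm (i + j))
  (dN : forall i, Nm i -> Nm (i - 1)).

Definition is_dg_module : Prop :=
  (forall i (c : R) (x y : Nm i), dN (c *: x + y) = c *: dN x + dN y) /\
  (forall i j (c : R) (b b' : Bm i) (n : Nm j), act (c *: b + b') n = c *: act b n + act b' n) /\
  (forall i j (c : R) (b : Bm i) (n n' : Nm j), act b (c *: n + n') = c *: act b n + act b n') /\
  (forall i j k (b : Bm i) (b' : Bm j) (n : Nm k),
      act (mulB b b') n = gcast Nm (addrA i j k) (act b (act b' n))) /\
  (forall j (n : Nm j), gcast Nm (add0r j) (act oneB n) = n) /\
  (forall i (n : Nm i), dN (dN n) = 0) /\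
  (forall i j (b : Bm i) (n : Nm j),
      dN (act b n) = gcast Nm (eq_dl i j) (act (dB b) n)
                     + sgn R i *: gcast Nm (eq_dr i j) (act b (dN n))).

Definition in_span (E : int -> Type) (e : forall i, E i -> Nm i)
  (P : forall i, E i -> Prop) (k : int) (n : Nm k) : Prop :=
  exists (s : seq {i : int & E i}) (c : forall p : {i : int & E i}, Bm (k - tag p)),
    (forall p, List.In p s -> P (tag p) (tagged p)) /\
    n = \sum_(p <- s) gcast Nm (eq_subK k (tag p)) (act (c p) (e (tag p) (tagged p))).

Definition is_graded_basis (E : int -> Type) (e : forall i, E i -> Nm i) : Prop :=
  (forall k (n : Nm k), in_span e (fun _ _ => True) n) /\
  (forall k (s : seq {i : int & E i}) (c : forall p : {i : int & E i}, Bm (k - tag p)),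
     List.NoDup s ->
     \sum_(p <- s) gcast Nm (eq_subK k (tag p)) (act (c p) (e (tag p) (tagged p))) = 0 ->
     forall p, List.In p s -> c p = 0).

(* semibasis: a basis E = \bigcup_n E^n (E^n = elements of level <= n) with
   d(E^n) contained in the B-span of E^{n-1} *)
Definition is_semifree_dg_module : Prop :=
  is_dg_module /\
  exists (E : int -> Type) (e : forall i, E i -> Nm i) (lev : forall i, E i -> nat),
    is_graded_basis e /\
    forall i (x : E i), in_span e (fun j y => (lev j y < lev i x)%N) (dN (e i x)).
End DGModules.

(* Leibniz for the Koszul generator e = (1, 0) of B_1 acting on (0, m) gives
   xi = -alpha and tau = t; d^2 = 0 on (0, m) gives alpha^2 = -t delta and
   delta alpha = alpha delta; Leibniz for (0, a) acting on (0, m) gives the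
   A-linearity of delta and the Leibniz rule for alpha.  Conversely these
   identities, which by linearity need only be checked on a basis of each A_i,
   make N a DG module.  Finally N is always semi-free: it is free over B on the
   elements (0, 1_x), one for each copy A_0 of degree l indexed by x : X l, and
   since A is non-negatively graded, d of a basis element of degree l lies in
   the span of basis elements of degree < l; as the degrees are bounded below,
   l - i0 serves as the level of a semibasis. *)

From HB Require Import structures.
From mathcomp Require Import all_boot all_order all_algebra.
From mathcomp Require Import boolp zify.
From Stdlib Require List.
Set Implicit Arguments. Unset Strict Implicit. Unset Printing Implicit Defensive.
Import GRing.Theory.
Local Open Scope ring_scope.

Section DegreeTransport.
Variables (R : pzRingType) (V : int -> lmodType R).

(* A cast that needs no proof of [i = j] (it is [0] when the degrees differ):
   rewriting [gcast] into it forgets the equality proofs, so that two casts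
   along different proofs can be compared. *)
Definition tcast i j (x : V i) : V j :=
  match i =P j with ReflectT e => gcast V e x | ReflectF _ => 0 end.

Lemma gcastE i j (e : i = j) x : gcast V e x = tcast j x.
Proof.
rewrite /tcast; case: (i =P j) => [e'|ne]; last by case: (ne e).
by rewrite (eq_irrelevance e e').
Qed.

Lemma tcast_id i (x : V i) : tcast i x = x.
Proof. by rewrite -(gcastE erefl). Qed.

Lemma gcast_id i (e : i = i) (x : V i) : gcast V e x = x.
Proof. by rewrite gcastE tcast_id. Qed.

Lemma gcast_comp i j k (e1 : i = j) (e2 : j = k) x :
  gcast V e2 (gcast V e1 x) = gcast V (etrans e1 e2) x.
Proof. by case: k / e2; case: j / e1. Qed.

Lemma gcastD i j (e : i = j) x y : gcast V e (x + y) = gcast V e x + gcast V e y.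
Proof. by case: j / e. Qed.

Lemma gcastZ i j (e : i = j) c x : gcast V e (c *: x) = c *: gcast V e x.
Proof. by case: j / e. Qed.

Lemma gcastN i j (e : i = j) x : gcast V e (- x) = - gcast V e x.
Proof. by case: j / e. Qed.

Lemma gcast0 i j (e : i = j) : gcast V e 0 = 0.
Proof. by case: j / e. Qed.

Lemma tcastZ i j c (x : V i) : tcast j (c *: x) = c *: tcast j x.
Proof. by rewrite /tcast; case: (i =P j) => // e; rewrite ?gcastZ ?scaler0. Qed.

Lemma tcastN i j (x : V i) : tcast j (- x) = - tcast j x.
Proof. by rewrite /tcast; case: (i =P j) => // e; rewrite ?gcastN ?oppr0. Qed.

Lemma tcast0 i j : tcast j (0 : V i) = 0.
Proof. by rewrite /tcast; case: (i =P j) => // e; rewrite ?gcast0. Qed.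

Lemma tcast_tcast i j k (x : V i) : i = j -> tcast k (tcast j x : V j) = tcast k x.
Proof. by move=> e; subst; rewrite tcast_id. Qed.

Lemma tcast_inj i k (x y : V i) : i = k -> tcast k x = tcast k y -> x = y.
Proof. by move=> e; subst; rewrite !tcast_id. Qed.
End DegreeTransport.

Lemma sgn_sub1 (R : pzRingType) (i : int) : sgn R (i - 1) = - sgn R i.
Proof.
rewrite /sgn; case: i => [[|n]|n].
- by rewrite expr1 expr0.
- have -> : absz (n.+1%:Z - 1) = n by lia.
  by rewrite exprS mulN1r opprK.
- have -> : absz (Negz n - 1) = n.+2 by lia.
  by rewrite /= exprS mulN1r.
Qed.

Lemma sgnD (R : pzRingType) (i j : int) : sgn R (i + j) = sgn R i * sgn R j.
Proof.
have sgn_add1 k : sgn R (k + 1) = - sgn R k by rewrite -{2}(addrK 1 k) sgn_sub1 opprK.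
elim/int_rec: j => [|n IH|n IH].
- by rewrite addr0 /sgn expr0 mulr1.
- have -> : i + n.+1%:Z = (i + n) + 1 by lia.
  have -> : n.+1%:Z = n%:Z + 1 by lia.
  by rewrite !sgn_add1 IH mulrN.
- have -> : i + - n.+1%:Z = (i + - n%:Z) - 1 by lia.
  have -> : - n.+1%:Z = - n%:Z - 1 by lia.
  by rewrite !sgn_sub1 IH mulrN.
Qed.

Lemma sgn_sq (R : pzRingType) (i : int) : sgn R i * sgn R i = 1.
Proof. by rewrite /sgn -exprD -signr_odd oddD addbb. Qed.

Lemma basis_ind (R : pzRingType) (V : lmodType R) n (g : 'I_n -> V) (Q : V -> Prop) :
  is_basis g -> Q 0 -> (forall x y, Q x -> Q y -> Q (x + y)) ->
  (forall c x, Q x -> Q (c *: x)) -> (forall s, Q (g s)) -> forall v, Q v.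
Proof.
move=> [spans _] Q0 QD QZ Qg v; case: (spans v) => c ->.
by apply: (big_ind Q) => // s _; apply: QZ.
Qed.

Section ScalarAction.
Variables (R : comRingType) (A : cdga R) (X : int -> Type).
Local Notation M := (Mmod A X).

Lemma Mmod_ext i (m m' : M i) : (forall p, dcomp m p = dcomp m' p) -> m = m'.
Proof. by move=> H; apply: val_inj; apply: functional_extensionality_dep => p; exact: H. Qed.

Lemma dcompD i (m m' : M i) p : dcomp (m + m') p = dcomp m p + dcomp m' p.
Proof. by []. Qed.

Lemma dcompZ i c (m : M i) p : dcomp (c *: m) p = c *: dcomp m p.
Proof. by []. Qed.

Lemma dcomp0 i p : dcomp (0 : M i) p = 0.
Proof. by []. Qed.

Lemma dcomp_gcast i j (e : i = j) (m : M i) p :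
  dcomp (gcast M e m) p = gcast A (congr1 (fun z => z - tag p) e) (dcomp m p).
Proof. by case: j / e. Qed.

Lemma dcomp_actM k j (a : A k) (m : M j) p :
  dcomp (actM a m) p = gcast A (eq_sub k j (tag p)) (dga_mul a (dcomp m p)).
Proof. by []. Qed.

Lemma dga_mul_gcastr k i j (e : i = j) (a : A k) (b : A i) :
  dga_mul a (gcast A e b) = gcast A (congr1 (fun z => k + z) e) (dga_mul a b).
Proof. by case: j / e. Qed.

Lemma dga_mulr1 k (a : A k) : dga_mul a (dga_one A) = gcast A (esym (addr0 k)) a.
Proof.
rewrite dga_mulC /sgn mulr0 /= expr0 scale1r.
by apply/esym; rewrite -{1}(dga_mul1 a) gcast_comp !gcastE.
Qed.

Lemma dga_dD i (a b : A i) : dga_d (a + b) = dga_d a + dga_d b.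
Proof. by rewrite -(scale1r a) dga_d_lin !scale1r. Qed.

Lemma dga_d0 i : dga_d (0 : A i) = 0.
Proof. by apply: (@addrI _ (dga_d (0 : A i))); rewrite -dga_dD !addr0. Qed.

Lemma dga_dZ i c (a : A i) : dga_d (c *: a) = c *: dga_d a.
Proof. by rewrite -(addr0 (c *: a)) dga_d_lin dga_d0 addr0. Qed.

Lemma dga_d_gcast i j (e : i = j) (a : A i) :
  dga_d (gcast A e a) = gcast A (congr1 (fun z => z - 1) e) (dga_d a).
Proof. by case: j / e. Qed.

Lemma dga_d_one : dga_d (dga_one A) = 0.
Proof. exact: dga_pos. Qed.

Lemma actM_gcastl k k' j (e : k = k') (a : A k) (m : M j) :
  actM (gcast A e a) m = gcast M (congr1 (fun z => z + j) e) (actM a m).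
Proof. by case: k' / e. Qed.

Lemma actM_gcastr k j j' (e : j = j') (a : A k) (m : M j) :
  actM a (gcast M e m) = gcast M (congr1 (fun z => k + z) e) (actM a m).
Proof. by case: j' / e. Qed.

Lemma actM_linl k j c (a a' : A k) (m : M j) :
  actM (c *: a + a') m = c *: actM a m + actM a' m.
Proof.
apply: Mmod_ext => p; rewrite dcompD dcompZ !dcomp_actM.
by rewrite dga_mul_linl gcastD gcastZ.
Qed.

Lemma actM_linr k j c (a : A k) (m m' : M j) :
  actM a (c *: m + m') = c *: actM a m + actM a m'.
Proof.
apply: Mmod_ext => p; rewrite dcompD dcompZ !dcomp_actM dcompD dcompZ.
by rewrite dga_mul_linr gcastD gcastZ.
Qed.

Lemma actM0l k j (m : M j) : actM (0 : A k) m = 0.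
Proof. by apply: Mmod_ext => p; rewrite dcomp_actM dga_mul0r gcast0. Qed.

Lemma actM0r k j (a : A k) : actM a (0 : M j) = 0.
Proof. by apply: Mmod_ext => p; rewrite dcomp_actM dcomp0 dga_mulr0 gcast0. Qed.

Lemma actMDl k j (a a' : A k) (m : M j) : actM (a + a') m = actM a m + actM a' m.
Proof. by rewrite -(scale1r a) actM_linl !scale1r. Qed.

Lemma actMDr k j (a : A k) (m m' : M j) : actM a (m + m') = actM a m + actM a m'.
Proof. by rewrite -(scale1r m) actM_linr !scale1r. Qed.

Lemma actMZl k j c (a : A k) (m : M j) : actM (c *: a) m = c *: actM a m.
Proof. by rewrite -(addr0 (c *: a)) actM_linl actM0l addr0. Qed.

Lemma actMZr k j c (a : A k) (m : M j) : actM a (c *: m) = c *: actM a m.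
Proof. by rewrite -(addr0 (c *: m)) actM_linr actM0r addr0. Qed.

Lemma actMNl k j (a : A k) (m : M j) : actM (- a) m = - actM a m.
Proof. by rewrite -scaleN1r actMZl scaleN1r. Qed.

Lemma actMNr k j (a : A k) (m : M j) : actM a (- m) = - actM a m.
Proof. by rewrite -scaleN1r actMZr scaleN1r. Qed.

Lemma actMA k1 k2 j (a : A k1) (b : A k2) (m : M j) :
  actM (dga_mul a b) m = gcast M (addrA k1 k2 j) (actM a (actM b m)).
Proof.
apply: Mmod_ext => p; rewrite dcomp_gcast !dcomp_actM dga_mulA dga_mul_gcastr.
by rewrite !gcast_comp !gcastE.
Qed.

Lemma actM1 j (m : M j) : gcast M (add0r j) (actM (dga_one A) m) = m.
Proof.
apply: Mmod_ext => p; rewrite dcomp_gcast dcomp_actM gcast_comp.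
by rewrite -{2}(dga_mul1 (dcomp m p)) !gcastE.
Qed.

Lemma actM1E j (m : M j) : actM (dga_one A) m = gcast M (esym (add0r j)) m.
Proof. by rewrite -{2}(actM1 m) gcast_comp gcast_id. Qed.
End ScalarAction.

Section GradedModule.
Variables (R : comRingType) (A : cdga R) (X : int -> Type).
Local Notation M := (Mmod A X).
Local Notation N := (Nmod A X).
Local Notation B := (Bmod A).

Lemma gcast_Nmod i j (e : i = j) (n : N i) :
  gcast N e n = (gcast M (congr1 (fun z => z - 1) e) n.1, gcast M e n.2).
Proof. by case: j / e; case: n. Qed.

Lemma scale_pair (U V : lmodType R) c (x : U) (y : V) :
  c *: ((x, y) : (U * V)%type) = (c *: x, c *: y).
Proof. by []. Qed.

Lemma add_pair (U V : lmodType R) (x x' : U) (y y' : V) :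
  ((x, y) : (U * V)%type) + (x', y') = (x + x', y + y').
Proof. by []. Qed.

Lemma zero_pair (U V : lmodType R) : (0 : (U * V)%type) = (0, 0).
Proof. by []. Qed.

Ltac actM_simpl := rewrite ?(gcastD, gcastZ, gcastN, gcast0, actM_gcastl, actM_gcastr,
   actMDl, actMDr, actMZl, actMZr, actMNl, actMNr, actM0l, actM0r, gcast_comp).

Lemma Nact_linl i j c (b b' : B i) (n : N j) :
  Nact (c *: b + b') n = c *: Nact b n + Nact b' n.
Proof.
case: b b' n => [b1 b2] [b1' b2'] [n1 n2]; rewrite /Nact /= scale_pair add_pair.
congr (_, _); last by rewrite actM_linl.
rewrite !actM_linl !gcastD !gcastZ !scalerDr !scalerA (mulrC c) -!scalerA.
by rewrite addrACA.
Qed.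

Lemma Nact_linr i j c (b : B i) (n n' : N j) :
  Nact b (c *: n + n') = c *: Nact b n + Nact b n'.
Proof.
case: b n n' => [b1 b2] [n1 n2] [n1' n2']; rewrite /Nact /= scale_pair add_pair.
congr (_, _); last by rewrite actM_linr.
rewrite !actM_linr !gcastD !gcastZ !scalerDr !scalerA (mulrC c) -!scalerA.
by rewrite addrACA.
Qed.

Lemma NactA i j k (b : B i) (b' : B j) (n : N k) :
  Nact (Bmul b b') n = gcast N (addrA i j k) (Nact b (Nact b' n)).
Proof.
case: b b' n => [b1 b2] [b1' b2'] [n1 n2]; rewrite /Nact /Bmul gcast_Nmod /=.
congr (_, _); last by rewrite actMA.
actM_simpl; rewrite !actMA; actM_simpl.
rewrite !gcastE sgnD -scalerA scalerDr; symmetry; exact: addrA.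
Qed.

Lemma Nact1 j (n : N j) : gcast N (add0r j) (Nact (Bone A) n) = n.
Proof.
case: n => [n1 n2]; rewrite /Nact /Bone gcast_Nmod /=.
congr (_, _); last by rewrite actM1.
actM_simpl; rewrite /sgn expr0 scale1r; apply: etrans (add0r _) _.
by rewrite -{2}(actM1 n1) !gcastE.
Qed.
End GradedModule.

Section Differential.
Variables (R : comRingType) (A : cdga R) (X : int -> Type).
Local Notation M := (Mmod A X).
Local Notation N := (Nmod A X).
Local Notation B := (Bmod A).

(* The four maps are applied through this constant in the computations below:
   [rewrite] keyed on it is fast, whereas patterns headed by the coercion of
   [{linear _ -> _}] make it attempt costly unifications all over the goal. *)
Definition lin_apply (h : int -> int) (L : forall i, {linear M i -> M (h i)}) i (x : M i) :
  M (h i) := L i x.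

Section LinearFamily.
Variables (h : int -> int) (L : forall i, {linear M i -> M (h i)}).

Lemma lin_applyD i (x y : M i) : lin_apply L (x + y) = lin_apply L x + lin_apply L y.
Proof. exact: linearD. Qed.

Lemma lin_applyZ i c (x : M i) : lin_apply L (c *: x) = c *: lin_apply L x.
Proof. exact: linearZZ. Qed.

Lemma lin_applyN i (x : M i) : lin_apply L (- x) = - lin_apply L x.
Proof. exact: linearN. Qed.

Lemma lin_apply0 i : lin_apply L (0 : M i) = 0.
Proof. exact: linear0. Qed.

Lemma lin_apply_gcast i j (e : i = j) x :
  lin_apply L (gcast M e x) = gcast M (congr1 h e) (lin_apply L x).
Proof. by case: j / e. Qed.
End LinearFamily.

Variables (r : int -> nat) (gam : forall i, 'I_(r i) -> A i) (t : R)
  (xi : forall i, {linear M i -> M (i - 1)})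
  (tau : forall i, {linear M i -> M i})
  (delta : forall i, {linear M i -> M (i - 1 - 1)})
  (alpha : forall i, {linear M i -> M (i - 1)}).

Local Notation dN := (Nd xi tau delta alpha).
Local Notation N_is_dg := (is_dg_module (@Bmul R A) (Bone A) (@Bd R A t) (@Nact R A X) dN).

Definition dg_conditions : Prop :=
  (forall i (m : M i), xi i m = - alpha i m) /\
  (forall i (m : M i), tau i m = t *: m) /\
  (forall i (m : M i), alpha (i - 1) (alpha i m) = - (t *: delta i m)) /\
  (forall i (m : M (i + 1)),
     delta i (gcast M (eq_addK1 i) (alpha (i + 1) m))
     = alpha (i - 1) (gcast M (eq_addK1' i) (delta (i + 1) m))) /\
  (forall i j (s : 'I_(r i)) (m : M j),
     delta (i + j) (actM (gam s) m) = gcast M (eq_dd i j) (actM (gam s) (delta j m))) /\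
  (forall i j (s : 'I_(r i)) (m : M j),
     alpha (i + j) (actM (gam s) m)
     = gcast M (eq_dl i j) (actM (dga_d (gam s)) m)
       + sgn R i *: gcast M (eq_dr i j) (actM (gam s) (alpha j m))).

Lemma Nd_lin_apply i (n : N i) :
  dN n = (lin_apply xi n.1 + lin_apply delta n.2, lin_apply tau n.1 + lin_apply alpha n.2).
Proof. by []. Qed.

Ltac dN_simpl := rewrite ?(gcastD, gcastZ, gcastN, gcast0, actM_gcastl, actM_gcastr,
   actMDl, actMDr, actMZl, actMZr, actMNl, actMNr, actM0l, actM0r, gcast_comp,
   dga_d_gcast, dga_d_one, dga_d0, actM1E,
   lin_applyD, lin_applyZ, lin_applyN, lin_apply0, lin_apply_gcast).

Section FromDGModule.
Hypothesis N_dg : N_is_dg.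

Lemma dg_xi_tau j (m : M j) : xi j m = - alpha j m /\ tau j m = t *: m.
Proof.
case: N_dg => _ [_ [_ [_ [_ [_ leibniz]]]]].
(* Leibniz rule for the Koszul generator (1, 0) of B_1 acting on (0, m) *)
have := leibniz 1 j (gcast A (esym (subrr 1)) (dga_one A), 0) (0, m).
rewrite !Nd_lin_apply /Nact /Bd /= !gcast_Nmod scale_pair add_pair => H.
have /= H1 := congr1 fst H; have /= H2 := congr1 snd H; clear H.
move: H1 H2; dN_simpl; rewrite !gcastE /sgn expr1 expr0.
rewrite ?scaler0 ?addr0 ?add0r ?oppr0 ?scaleN1r ?subr0 ?sub0r => H1 H2.
split.
- by apply: (tcast_inj (k := 1 + j - 1 - 1)); [lia | rewrite tcastN].
- by apply: (tcast_inj (k := 1 + j - 1)); [lia | rewrite tcastZ].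
Qed.

Lemma NdE i (n : N i) : dN n = (- alpha (i - 1) n.1 + delta i n.2, t *: n.1 + alpha i n.2).
Proof. by rewrite /Nd (proj1 (dg_xi_tau n.1)) (proj2 (dg_xi_tau n.1)). Qed.

Lemma dg_alpha_delta i (m : M i) :
  alpha (i - 1) (alpha i m) = - (t *: delta i m) /\
  delta (i - 1) (alpha i m) = alpha (i - 1 - 1) (delta i m).
Proof.
case: N_dg => _ [_ [_ [_ [_ [dd0 _]]]]].
have xiE k (x : M k) : lin_apply xi x = - lin_apply alpha x.
  exact: (proj1 (dg_xi_tau x)).
have tauE k (x : M k) : lin_apply tau x = t *: x.
  exact: (proj2 (dg_xi_tau x)).
have := dd0 i (0, m); rewrite !Nd_lin_apply /= zero_pair => H.
have /= K1 := congr1 fst H; have /= K2 := congr1 snd H; clear H.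
move: K1 K2; dN_simpl; rewrite ?xiE ?tauE; dN_simpl.
rewrite ?oppr0 ?scaler0 ?add0r ?addr0 ?sub0r ?subr0 ?opprK.
move=> /eqP; rewrite (addrC (- lin_apply alpha _)) subr_eq0 => /eqP K1 /eqP.
by rewrite (addrC (t *: _)) addr_eq0 => /eqP K2.
Qed.

Lemma dg_actM i j (a : A i) (m : M j) :
  delta (i + j) (actM a m) = gcast M (eq_dd i j) (actM a (delta j m)) /\
  alpha (i + j) (actM a m) = gcast M (eq_dl i j) (actM (dga_d a) m)
                           + sgn R i *: gcast M (eq_dr i j) (actM a (alpha j m)).
Proof.
case: N_dg => _ [_ [_ [_ [_ [_ leibniz]]]]].
have := leibniz i j (0, a) (0, m).
rewrite !Nd_lin_apply /Nact /Bd /= !gcast_Nmod scale_pair add_pair => H.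
have /= H1 := congr1 fst H; have /= H2 := congr1 snd H; clear H.
move: H1 H2; dN_simpl; rewrite ?oppr0 ?scaler0 ?add0r ?addr0 ?sub0r ?subr0 ?opprK.
rewrite scalerA sgn_sq scale1r /lin_apply !gcastE => K1 K2.
by split.
Qed.

Lemma dg_conditionsP : dg_conditions.
Proof.
split; [|split; [|split; [|split; [|split]]]].
- by move=> i m; case: (dg_xi_tau m).
- by move=> i m; case: (dg_xi_tau m).
- by move=> i m; case: (dg_alpha_delta m).
- move=> i m; rewrite -!/(lin_apply _ _) !lin_apply_gcast /lin_apply.
  by rewrite (proj2 (dg_alpha_delta m)) !gcastE.
- by move=> i j s m; case: (dg_actM (gam s) m).
- by move=> i j s m; case: (dg_actM (gam s) m).
Qed.
End FromDGModule.

Section ToDGModule.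
Hypotheses
  (xiE : forall i (m : M i), lin_apply xi m = - lin_apply alpha m)
  (tauE : forall i (m : M i), lin_apply tau m = t *: m)
  (alphaK : forall i (m : M i), lin_apply alpha (lin_apply alpha m) = - (t *: lin_apply delta m))
  (delta_alpha : forall i (m : M i),
     lin_apply delta (lin_apply alpha m) = lin_apply alpha (lin_apply delta m))
  (delta_actM : forall i j (a : A i) (m : M j),
     lin_apply delta (actM a m) = gcast M (eq_dd i j) (actM a (lin_apply delta m)))
  (alpha_actM : forall i j (a : A i) (m : M j),
     lin_apply alpha (actM a m)
     = gcast M (eq_dl i j) (actM (dga_d a) m)
       + sgn R i *: gcast M (eq_dr i j) (actM a (lin_apply alpha m))).

Lemma NdE_of_conditions i (n : N i) :
  dN n = (- lin_apply alpha n.1 + lin_apply delta n.2, t *: n.1 + lin_apply alpha n.2).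
Proof. by rewrite Nd_lin_apply xiE tauE. Qed.

Lemma Nd_linear i c (x y : N i) : dN (c *: x + y) = c *: dN x + dN y.
Proof.
case: x y => [x1 x2] [y1 y2]; rewrite !NdE_of_conditions /= !scale_pair !add_pair.
congr (_, _); dN_simpl.
- by rewrite opprD addrACA scalerDr scalerN.
- by rewrite scalerDr addrACA scalerDr !scalerA mulrC.
Qed.

Lemma NdK i (n : N i) : dN (dN n) = 0.
Proof.
case: n => [n1 n2]; rewrite !NdE_of_conditions /= zero_pair; dN_simpl.
rewrite !alphaK delta_alpha; congr (_, _); first by rewrite opprK addNr.
by rewrite scalerDr scalerN addrACA addNr subrr addr0.
Qed.

Lemma Nd_leibniz i j (b : B i) (n : N j) :
  dN (Nact b n) = gcast N (eq_dl i j) (Nact (Bd t b) n)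
                  + sgn R i *: gcast N (eq_dr i j) (Nact b (dN n)).
Proof.
have fst_identity (V : lmodType R) (s : R) (u v w x y z : V) : s * s = 1 ->
    - (u - s *: v + s *: (w + s *: x)) + y =
    - u - s *: (t *: z + w) + s *: (t *: z + v + s *: (- x + y)).
  move=> ss; rewrite !scalerDr !scalerA ss !scale1r ?scalerN ?scaleNr.
  rewrite !opprD !opprK -!addrA; congr (_ + _).
  by rewrite [in RHS]addrCA addKr addrCA.
have snd_identity (V : lmodType R) (s : R) (u v w x : V) :
    t *: (u + s *: v) + (w + s *: x) = t *: u + w + s *: (t *: v + x).
  rewrite !scalerDr !scalerA mulrC -!addrA; congr (_ + _).
  by rewrite addrCA.
case: b n => [b1 b2] [n1 n2].
rewrite !NdE_of_conditions /Nact /Bd !gcast_Nmod /= scale_pair add_pair.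
congr (_, _); dN_simpl; rewrite ?delta_actM ?alpha_actM; dN_simpl; rewrite !gcastE.
- rewrite ?sgn_sub1 ?scalerN ?scaleNr ?opprK.
  exact: fst_identity (sgn_sq _ _).
- exact: snd_identity.
Qed.

Lemma dg_module_of_conditions : N_is_dg.
Proof.
split; [exact: Nd_linear|split; [exact: Nact_linl|split; [exact: Nact_linr|]]].
split; [exact: NactA|split; [exact: Nact1|split; [exact: NdK|exact: Nd_leibniz]]].
Qed.
End ToDGModule.

Lemma dg_conditions_dg_module : (forall i, is_basis (@gam i)) -> dg_conditions -> N_is_dg.
Proof.
move=> gam_basis [xiE [tauE [alphaK [delta_alpha [delta_gam alpha_gam]]]]].
apply: dg_module_of_conditions => //.
- move=> k n; have := delta_alpha (k - 1) (gcast M (esym (subrK 1 k)) n).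
  by rewrite -!/(lin_apply _ _) !lin_apply_gcast !gcast_comp !gcast_id.
- move=> i j a m; move: a m; apply: (basis_ind (gam_basis i)).
  + by move=> m; rewrite !actM0l lin_apply0 gcast0.
  + by move=> x y Hx Hy m; rewrite !actMDl lin_applyD Hx Hy gcastD.
  + by move=> c x Hx m; rewrite !actMZl lin_applyZ Hx gcastZ.
  + exact: delta_gam.
- move=> i j a m; move: a m; apply: (basis_ind (gam_basis i)).
  + by move=> m; rewrite !actM0l lin_apply0 dga_d0 actM0l !gcast0 scaler0 addr0.
  + move=> x y Hx Hy m; rewrite !actMDl lin_applyD Hx Hy dga_dD actMDl !gcastD scalerDr.
    exact: addrACA.
  + move=> c x Hx m; rewrite !actMZl lin_applyZ Hx dga_dZ actMZl !gcastZ scalerDr !scalerA.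
    by rewrite (mulrC c).
  + exact: alpha_gam.
Qed.
End Differential.

Section SemifreeBasis.
Variables (R : comRingType) (A : cdga R) (X : int -> Type) (t : R).
Local Notation M := (Mmod A X).
Local Notation N := (Nmod A X).
Local Notation B := (Bmod A).
Local Notation P := {l : int & X l}.

(* the unit of the summand A_0 of M_l indexed by x *)
Definition unit_dprod l (x : X l) : dprod (fun p : P => A (l - tag p)) := fun p =>
  match pselect (p = existT X l x) with
  | left h => gcast A (esym (etrans (congr1 (fun z => l - z) (congr1 (@tag _ X) h)) (subrr l)))
                (dga_one A)
  | right _ => 0
  end.

Lemma unit_dprod_finsupp l (x : X l) : finsupp (unit_dprod x).
Proof.
apply/asboolP; exists [:: existT X l x] => p; rewrite /unit_dprod.
by case: pselect => [h _|_]; [left | rewrite eqxx].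
Qed.

Definition unitM l (x : X l) : M l := DSum (unit_dprod_finsupp x).

Lemma dcomp_actM_unitM k l (x : X l) (a : A k) q :
  dcomp (actM a (unitM x)) q = if `[< q = existT X l x >] then tcast (k + l - tag q) a else 0.
Proof.
rewrite dcomp_actM /dcomp /= /unit_dprod; case: pselect => h.
- rewrite (asboolT h); subst q => /=.
  by rewrite dga_mul_gcastr dga_mulr1 !gcast_comp gcastE.
- by rewrite (asboolF h) dga_mulr0 gcast0.
Qed.

Definition basisN l (x : X l) : N l := (0, unitM x).

Definition basis_term k (c : forall p : P, B (k - tag p)) (p : P) : N k :=
  gcast N (eq_subK k (tag p)) (Nact (c p) (basisN (tagged p))).

Lemma dcomp_basis_term_fst k c (p q : P) :
  dcomp (@basis_term k c p).1 q = if `[< q = p >] then tcast (k - 1 - tag q) (c q).1 else 0.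
Proof.
case: p c => l x c; rewrite /basis_term gcast_Nmod /Nact /= dcomp_gcast dcompD dcompZ.
rewrite !dcomp_gcast actM0r dcomp0 gcast0 scaler0 addr0 dcomp_actM_unitM.
have [h|h] := pselect (q = existT X l x); last by rewrite !(asboolF h) !gcast0.
rewrite !(asboolT h); subst q => /=; rewrite !gcastE.
by repeat (rewrite tcast_tcast; last by lia).
Qed.

Lemma dcomp_basis_term_snd k c (p q : P) :
  dcomp (@basis_term k c p).2 q = if `[< q = p >] then tcast (k - tag q) (c q).2 else 0.
Proof.
case: p c => l x c; rewrite /basis_term gcast_Nmod /Nact /= dcomp_gcast dcomp_actM_unitM.
have [h|h] := pselect (q = existT X l x); last by rewrite !(asboolF h) gcast0.
rewrite !(asboolT h); subst q => /=; rewrite !gcastE.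
by repeat (rewrite tcast_tcast; last by lia).
Qed.

Lemma sum_if_eq_nodup (V : zmodType) (s : seq P) (q : P) (g : V) : List.NoDup s ->
  \sum_(p <- s) (if `[< q = p >] then g else 0) = if `[< List.In q s >] then g else 0.
Proof.
elim: s => [|p s IH] nd; first by rewrite big_nil asboolF.
move: nd => /List.NoDup_cons_iff [nps nds]; rewrite big_cons IH //.
case: (asboolP (q = p)) => [e|ne].
- by subst q; rewrite (asboolF nps) (asboolT (or_introl erefl)) addr0.
- case: (asboolP (List.In q s)) => [h|h].
  + by rewrite add0r asboolT //; right.
  + by rewrite add0r asboolF // => -[e|//]; apply: ne.
Qed.

Lemma fst_sum k (s : seq P) (F : P -> N k) : (\sum_(p <- s) F p).1 = \sum_(p <- s) (F p).1.
Proof. exact: (big_morph fst). Qed.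

Lemma snd_sum k (s : seq P) (F : P -> N k) : (\sum_(p <- s) F p).2 = \sum_(p <- s) (F p).2.
Proof. exact: (big_morph snd). Qed.

Lemma dcomp_sum k (s : seq P) (F : P -> M k) q :
  dcomp (\sum_(p <- s) F p) q = \sum_(p <- s) dcomp (F p) q.
Proof. exact: (big_morph (fun m => dcomp m q)). Qed.

Definition coords k (n : N k) (p : P) : B (k - tag p) :=
  (tcast (k - tag p - 1) (dcomp n.1 p), tcast (k - tag p) (dcomp n.2 p)).

Lemma coords_span k (n : N k) (s : seq P) : List.NoDup s ->
  (forall q, ~ List.In q s -> dcomp n.1 q = 0 /\ dcomp n.2 q = 0) ->
  n = \sum_(p <- s) basis_term (coords n) p.
Proof.
move=> nd supp; rewrite [RHS]surjective_pairing.
case: n supp => n1 n2 supp; congr (_, _); apply: Mmod_ext => q.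
- rewrite fst_sum dcomp_sum; under eq_bigr => p _ do rewrite dcomp_basis_term_fst.
  rewrite sum_if_eq_nodup //; case: asboolP => h; last by case: (supp q h).
  by rewrite /coords /= tcast_tcast ?tcast_id //; lia.
- rewrite snd_sum dcomp_sum; under eq_bigr => p _ do rewrite dcomp_basis_term_snd.
  rewrite sum_if_eq_nodup //; case: asboolP => h; last by case: (supp q h).
  by rewrite /coords /= !tcast_id.
Qed.

Lemma basis_term_free k (s : seq P) (c : forall p : P, B (k - tag p)) : List.NoDup s ->
  \sum_(p <- s) basis_term c p = 0 -> forall p, List.In p s -> c p = 0.
Proof.
move=> nd H p ps.
have /= H1 := congr1 (fun z => dcomp z.1 p) H; have /= H2 := congr1 (fun z => dcomp z.2 p) H.
move: H1 H2; rewrite fst_sum snd_sum !dcomp_sum.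
under eq_bigr => p' _ do rewrite dcomp_basis_term_fst.
under [X in _ -> X = _ -> _]eq_bigr => p' _ do rewrite dcomp_basis_term_snd.
rewrite !sum_if_eq_nodup // (asboolT ps) => H1 H2.
have E1 : (c p).1 = 0 by apply: (tcast_inj (k := k - 1 - tag p)); [lia | rewrite H1 tcast0].
have E2 : (c p).2 = 0 by apply: (tcast_inj (k := k - tag p)); [lia | rewrite H2 tcast0].
by rewrite [c p]surjective_pairing E1 E2.
Qed.

Lemma dga_deg_ge0 K (a : A K) : a != 0 -> 0 <= K.
Proof.
apply: contraR => K_lt0.
by rewrite (@dga_pos _ _ K _ a) ?eqxx //; lia.
Qed.

Lemma support_span k (n : N k) : exists s, List.NoDup s /\
  (forall p, List.In p s -> dcomp n.1 p != 0 \/ dcomp n.2 p != 0) /\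
  n = \sum_(p <- s) basis_term (coords n) p.
Proof.
have [s1 supp1] := asboolP _ (dsum_valP n.1).
have [s2 supp2] := asboolP _ (dsum_valP n.2).
pose nz q := `[< dcomp n.1 q != 0 \/ dcomp n.2 q != 0 >].
pose s := List.filter nz (List.nodup (fun p q => pselect (p = q)) (s1 ++ s2)).
have memP q : List.In q s <-> dcomp n.1 q != 0 \/ dcomp n.2 q != 0.
  split => [/List.filter_In [_ /asboolP]//|nzq].
  apply/List.filter_In; split; last exact/asboolP.
  apply/List.nodup_In/List.in_or_app.
  by case: nzq => [/supp1|/supp2]; [left|right].
have nd : List.NoDup s by apply/List.NoDup_filter/List.NoDup_nodup.
exists s; split=> //; split=> [p /memP //|]; apply: coords_span => // q nin.
by split; apply/eqP/negPn/negP => nzq; apply: nin; apply/memP; auto.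
Qed.

Lemma semifree_of_dg_module (i0 : int) (X_bounded : forall l, l < i0 -> X l -> False)
    (dN : forall i, N i -> N (i - 1)) :
  is_dg_module (@Bmul R A) (Bone A) (@Bd R A t) (@Nact R A X) dN ->
  is_semifree_dg_module (@Bmul R A) (Bone A) (@Bd R A t) (@Nact R A X) dN.
Proof.
have deg_ge_i0 l (x : X l) : i0 <= l.
  have [//|lt_l] := boolP (i0 <= l).
  by case: (X_bounded l _ x); lia.
move=> dg; split => //.
exists X, (fun l x => basisN x), (fun l _ => absz (l - i0)); split; first split.
- move=> k n; have [s [_ [_ ->]]] := support_span n.
  by exists s, (coords n); split.
- exact: basis_term_free.
- move=> i x; have [s [_ [nz_coord ->]]] := support_span (dN i (basisN x)).
  exists s, (coords (dN i (basisN x))); split => // p ps.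
  have lti : tag p < i by case: (nz_coord p ps) => /dga_deg_ge0; lia.
  have := deg_ge_i0 _ (tagged p); have := deg_ge_i0 _ x; lia.
Qed.
End SemifreeBasis.

Unset Implicit Arguments.
Theorem lemma2p6 (R : comRingType) (A : cdga R)
  (r : int -> nat) (gam : forall i, 'I_(r i) -> A i) (t : R) (X : int -> Type)
  (xi : forall i, {linear Mmod A X i -> Mmod A X (i - 1)})
  (tau : forall i, {linear Mmod A X i -> Mmod A X i})
  (delta : forall i, {linear Mmod A X i -> Mmod A X (i - 1 - 1)})
  (alpha : forall i, {linear Mmod A X i -> Mmod A X (i - 1)}) :
  noetherian R ->
  (forall i, is_basis (gam i)) ->
  (exists i0 : int, forall l, l < i0 -> X l -> False) ->
  let N_is_dg := is_dg_module (@Bmul R A) (Bone A) (@Bd R A t) (@Nact R A X)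
                   (Nd xi tau delta alpha) in
  [<-> (* (i) *) is_semifree_dg_module (@Bmul R A) (Bone A) (@Bd R A t) (@Nact R A X)
                   (Nd xi tau delta alpha);
       (* (ii) *) N_is_dg;
       (* (iii) *)
       (forall i (m : Mmod A X i), xi i m = - alpha i m) /\
       (forall i (m : Mmod A X i), tau i m = t *: m) /\
       (forall i (m : Mmod A X i), alpha (i - 1) (alpha i m) = - (t *: delta i m)) /\
       (forall i (m : Mmod A X (i + 1)),
          delta i (gcast (Mmod A X) (eq_addK1 i) (alpha (i + 1) m))
          = alpha (i - 1) (gcast (Mmod A X) (eq_addK1' i) (delta (i + 1) m))) /\
       (forall i j (s : 'I_(r i)) (m : Mmod A X j),
          delta (i + j) (actM (gam i s) m)
          = gcast (Mmod A X) (eq_dd i j) (actM (gam i s) (delta j m))) /\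
       (forall i j (s : 'I_(r i)) (m : Mmod A X j),
          alpha (i + j) (actM (gam i s) m)
          = gcast (Mmod A X) (eq_dl i j) (actM (dga_d (gam i s)) m)
            + sgn R i *: gcast (Mmod A X) (eq_dr i j) (actM (gam i s) (alpha j m)))]
  /\ (N_is_dg -> forall i (n : Nmod A X i),
        Nd xi tau delta alpha n = (- alpha (i - 1) n.1 + delta i n.2, t *: n.1 + alpha i n.2)).
Proof.
move=> _ gam_basis [i0 X_bounded] N_is_dg; rewrite /N_is_dg.
split; last exact: NdE.
tfae.
- by case.
- exact: dg_conditionsP.
- move=> conditions; apply: (semifree_of_dg_module X_bounded).
  exact: dg_conditions_dg_module gam_basis conditions.
Qed.
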